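(* Let $U\in\mathcal L(\mathcal K)$ and $T,V,K\in\mathcal L(\mathcal H)$, $X\in\mathcal L(\mathcal K,\mathcal H)$, where $U$ and $V$ are unitary, $K$ is compact, $T=V+K$, $XU=TX$, and $X\mathcal K$ is dense in $\mathcal H$. Then $\sigma(T)\subset\mathbb T$.
   Context: $\sigma(T)$ denotes the spectrum of $T$ and $\mathbb T$ the unit circle. *)

From HB Require Import structures.
From mathcomp Require Import all_boot all_order all_algebra.
From mathcomp Require Import complex.
From mathcomp Require Import all_classical all_reals all_analysis.
Import numFieldNormedType.Exports.
Import GRing.Theory Num.Theory.

Set Implicit Arguments.
Unset Strict Implicit.
Unset Printing Implicit Defensive.

Local Open Scope ring_scope.
Local Open Scope classical_set_scope.

(* Together with completeness of H this makes H a complex Hilbert space. *)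
Definition is_inner_product (R : realType) (H : normedModType R[i])
    (ip : H -> H -> R[i]) : Prop :=
  [/\ forall (a : R[i]) (x y z : H), ip (a *: x + y) z = a * ip x z + ip y z,
      forall x y : H, ip y x = (ip x y)^* &
      forall x : H, `|x| ^+ 2 = ip x x].

Definition clinear (R : realType) (E F : normedModType R[i]) (f : E -> F) : Prop :=
  forall (a : R[i]) (x y : E), f (a *: x + y) = a *: f x + f y.

Definition bounded_op (R : realType) (E F : normedModType R[i]) (f : E -> F) : Prop :=
  clinear f /\ continuous f.

Definition is_adjoint (R : realType) (H : normedModType R[i])
    (ip : H -> H -> R[i]) (f g : H -> H) : Prop :=
  forall x y : H, ip (f x) y = ip x (g y).

Definition unitary (R : realType) (H : normedModType R[i])
    (ip : H -> H -> R[i]) (U : H -> H) : Prop :=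
  bounded_op U /\
  exists Us : H -> H, [/\ bounded_op Us, is_adjoint ip U Us,
                        forall x, Us (U x) = x & forall x, U (Us x) = x].

Definition compact_op (R : realType) (E F : normedModType R[i]) (f : E -> F) : Prop :=
  bounded_op f /\ compact (closure (f @` [set x : E | `|x| <= 1])).

Definition spectrum (R : realType) (H : normedModType R[i]) (T : H -> H) : set R[i] :=
  [set l : R[i] | ~ exists S : H -> H,
      [/\ bounded_op S, forall x, S (T x - l *: x) = x &
          forall y, T (S y) - l *: S y = y]].

Definition unit_circle (R : realType) : set R[i] := [set z : R[i] | `|z| = 1].

From HB Require Import structures.
From mathcomp Require Import all_boot all_order all_algebra.
From mathcomp Require Import complex.
From mathcomp Require Import all_classical all_reals all_analysis.
From mathcomp Require Import ring lra.
Import numFieldNormedType.Exports.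
Import Order.TTheory GRing.Theory Num.Theory.
Local Open Scope ring_scope.
Local Open Scope classical_set_scope.
Local Open Scope complex_scope.

(* Fix l with |l| <> 1.  As V is unitary, V - l is invertible: solving
   V x - l x = y is a fixed point problem for the contraction x |-> V* (y + l x)
   if |l| < 1, and for x |-> l^-1 (V x - y) if |l| > 1.  With W the inverse,
   T - l = (V - l) (I + W K), and W K is compact.  Since X U = T X, the range of
   T - l contains X (range (U - l)) = range X, which is dense; hence I + W K has
   dense range.  Riesz-Schauder theory then shows that A = I + W K is
   invertible: by compactness A is bounded below on unit vectors far from its
   kernel, which together with Riesz's lemma makes the range of A closed, so A
   is onto; and if A had a nonzero kernel, surjectivity would make the kernels
   of the powers of A strictly increasing, and Riesz's lemma would produce
   unit vectors x_n for which the A x_n - x_n are 1/2-separated. *)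

(* Norms on a normed space over R[i] are R[i]-valued; [rnorm] is their real
   part, so that real arithmetic (lra, nra) applies to them. *)
Definition rnorm {R : realType} {E : normedModType R[i]} (x : E) : R :=
  complex.Re `|x|.

Section real_norm.
Context {R : realType} {E : normedModType R[i]}.
Implicit Types x y z : E.

Lemma rnormE x : `|x| = (rnorm x)%:C.
Proof. by rewrite /rnorm RRe_real // normr_real. Qed.

Lemma rnorm_ge0 x : 0 <= rnorm x.
Proof. by have := normr_ge0 x; rewrite rnormE lecR. Qed.

Lemma rnorm0 : rnorm (0 : E) = 0.
Proof. by rewrite /rnorm normr0. Qed.

Lemma rnorm0_eq0 x : rnorm x = 0 -> x = 0.
Proof. by move=> x0; apply/eqP; rewrite -normr_eq0 rnormE x0. Qed.

Lemma rnorm_gt0 x : (0 < rnorm x) = (x != 0).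
Proof. by rewrite -normr_gt0 rnormE ltcR. Qed.

Lemma rnormN x : rnorm (- x) = rnorm x.
Proof. by rewrite /rnorm normrN. Qed.

Lemma rdistC x y : rnorm (x - y) = rnorm (y - x).
Proof. by rewrite -rnormN opprB. Qed.

Lemma ler_rnormD x y : rnorm (x + y) <= rnorm x + rnorm y.
Proof. by have := ler_normD x y; rewrite !rnormE -rmorphD lecR. Qed.

Lemma ler_rdist_add z x y : rnorm (x - y) <= rnorm (x - z) + rnorm (z - y).
Proof. by rewrite -[x - y](subrKA z) ler_rnormD. Qed.

Lemma lerB_rdist x y : rnorm x - rnorm y <= rnorm (x - y).
Proof. by have := lerB_dist x y; rewrite !rnormE -rmorphB lecR. Qed.

Lemma rnormZ (a : R[i]) x : rnorm (a *: x) = rnorm (a : R[i]^o) * rnorm x.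
Proof. by apply: (@complexI R); rewrite -rnormE normrZ !rnormE rmorphM. Qed.

Lemma rnorm_small_eq0 x : (forall e, 0 < e -> rnorm x <= e) -> x = 0.
Proof.
move=> le_e; apply: rnorm0_eq0; apply/le_anti; rewrite rnorm_ge0 andbT.
by apply/ler_addgt0Pr => e e0; rewrite add0r le_e.
Qed.

Lemma ball_rnormE x y (e : R) : ball x e%:C y = (rnorm (x - y) < e).
Proof. by rewrite -ball_normE /ball_ /= rnormE ltcR. Qed.

Lemma closure_rnormP (A : set E) x : closure A x ->
  forall e, 0 < e -> exists2 y, A y & rnorm (x - y) < e.
Proof.
move=> Ax e e0; have /Ax[y [Ay xy]] : nbhs x (ball x e%:C).
  by apply: nbhsx_ballx; rewrite ltcR.
by exists y; rewrite // -ball_rnormE.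
Qed.

End real_norm.

Section scalar_norm.
Context {R : realType}.

Lemma ltc0R (r : R) : (0 < r%:C :> R[i]) = (0 < r).
Proof. by rewrite ltcE /= eqxx. Qed.

Lemma gtr0_realC (eps : R[i]) : 0 < eps -> exists2 e : R, 0 < e & eps = e%:C.
Proof. by move=> eps0; exists (complex.Re eps); rewrite -?ltc0R RRe_real ?gtr0_real. Qed.

Lemma rnormC_ge0 (r : R) : 0 <= r -> rnorm (r%:C : R[i]^o) = r.
Proof. by move=> r0; apply: (@complexI R); rewrite -rnormE ger0_norm ?lecR. Qed.

Lemma rnormV (a : R[i]) : rnorm (a^-1 : R[i]^o) = (rnorm (a : R[i]^o))^-1.
Proof. by apply: (@complexI R); rewrite -rnormE normfV rnormE fmorphV. Qed.

Lemma rnormZ_ge0 {E : normedModType R[i]} (r : R) (x : E) :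
  0 <= r -> rnorm (r%:C *: x) = r * rnorm x.
Proof. by move=> r0; rewrite rnormZ rnormC_ge0. Qed.

End scalar_norm.

Definition has_op_bound {R : realType} {E F : normedModType R[i]} (f : E -> F) :=
  exists2 c : R, 0 < c & forall x, rnorm (f x) <= c * rnorm x.

Section linear_maps.
Context {R : realType} {E F G : normedModType R[i]}.

Section clinear_theory.
Context {f : E -> F}.
Hypothesis f_lin : clinear f.

Lemma clinear0 : f 0 = 0.
Proof.
have := f_lin 1 0 0; rewrite !scale1r addr0 => f00.
by apply: (addrI (f 0)); rewrite addr0 -f00.
Qed.

Lemma clinearD x y : f (x + y) = f x + f y.
Proof. by have := f_lin 1 x y; rewrite !scale1r. Qed.

Lemma clinearZ a x : f (a *: x) = a *: f x.
Proof. by have := f_lin a x 0; rewrite !addr0 clinear0 addr0. Qed.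

Lemma clinearB x y : f (x - y) = f x - f y.
Proof. by rewrite clinearD -scaleN1r clinearZ scaleN1r. Qed.

End clinear_theory.

Lemma clinear_comp (f : F -> G) (g : E -> F) :
  clinear f -> clinear g -> clinear (f \o g).
Proof. by move=> f_lin g_lin a x y /=; rewrite g_lin f_lin. Qed.

Lemma clinear_subZ (f : E -> E) (l : R[i]) :
  clinear f -> clinear (fun x => f x - l *: x).
Proof.
move=> f_lin a x y; rewrite f_lin scalerDr scalerBr !scalerA [l * a]mulrC.
by rewrite opprD !addrA (addrAC (a *: f x)).
Qed.

Lemma has_op_bound_comp (f : F -> G) (g : E -> F) :
  has_op_bound f -> has_op_bound g -> has_op_bound (f \o g).
Proof.
move=> [a a0 fa] [b b0 gb]; exists (a * b); rewrite ?mulr_gt0 // => x /=.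
by rewrite -mulrA; apply: le_trans (fa _) _; rewrite ler_wpM2l // ltW.
Qed.

Lemma clinear_bounded_continuous (f : E -> F) :
  clinear f -> has_op_bound f -> continuous f.
Proof.
move=> f_lin [c c0 fc] x; apply/cvgrPdist_lt => _ /gtr0_realC[e e0 ->].
apply/nbhs_ballP; exists (e / c)%:C; first by rewrite /= ltc0R divr_gt0.
move=> y; rewrite /= ball_rnormE rnormE ltcR -(clinearB f_lin) => xy.
by apply: le_lt_trans (fc _) _; rewrite mulrC -ltr_pdivlMr.
Qed.

Lemma clinear_continuous_bound (f : E -> F) :
  clinear f -> continuous f -> has_op_bound f.
Proof.
move=> f_lin f_cont; have := f_cont 0 => /cvgrPdist_lt /(_ 1 ltr01).
rewrite (clinear0 f_lin) => /nbhs_ballP [_ /= /gtr0_realC[r r0 ->] small].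
exists (2 / r); first by rewrite divr_gt0.
move=> x; have [->|x0] := eqVneq x 0; first by rewrite (clinear0 f_lin) !rnorm0 mulr0.
have nx0 : 0 < rnorm x by rewrite rnorm_gt0.
set s := r / 2 / rnorm x; have s0 : 0 < s by rewrite !divr_gt0.
have /small : ball 0 r%:C (s%:C *: x).
  rewrite ball_rnormE sub0r rnormN (rnormZ_ge0 _ _ (ltW s0)) /s -mulrA mulVf ?gt_eqF //.
  by rewrite mulr1 ltr_pdivrMr // ltr_pMr // ltr1n.
rewrite sub0r normrN (clinearZ f_lin) rnormE -(rmorph1 (real_complex R)) ltcR.
rewrite (rnormZ_ge0 _ _ (ltW s0)) -ltr_pdivlMl // mulr1 => /ltW.
by rewrite /s !invfM !invrK [r^-1 * 2]mulrC.
Qed.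

End linear_maps.

Section sequences.
Context {R : realType} {E : normedModType R[i]}.
Implicit Types (u : nat -> E) (p : E).

Definition cluster_pt u p :=
  forall e, 0 < e -> forall m, exists2 n, (m <= n)%N & rnorm (u n - p) < e.

Definition rcauchy u :=
  forall e, 0 < e ->
  exists N, forall n m, (N <= n)%N -> (N <= m)%N -> rnorm (u n - u m) < e.

Lemma compact_cluster_pt (S : set E) u :
  compact S -> (forall n, S (u n)) -> exists p, cluster_pt u p.
Proof.
move=> cS Su; have [|p [_ clp]] := cS (u @ \oo) _.
  by exists 0%N => // n _; exact: Su.
exists p => e e0 m.
have tail_u : (u @ \oo) (u @` [set n | (m <= n)%N]) by exists m => // k /= mk; exists k.
have p_e : nbhs p (ball p e%:C) by apply: nbhsx_ballx; rewrite ltc0R.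
have [_ [[n /= mn <-] pun]] := clp _ _ tail_u p_e.
by exists n; rewrite // rdistC -ball_rnormE.
Qed.

Lemma cluster_pt_close {u p c} :
  cluster_pt u p -> 0 < c -> exists j k, (j < k)%N /\ rnorm (u k - u j) < c.
Proof.
move=> clp c0; have c20 : 0 < c / 2 by rewrite divr_gt0.
have [j _ uj] := clp _ c20 0%N; have [k jk uk] := clp _ c20 j.+1.
exists j, k; split => //; apply: le_lt_trans (ler_rdist_add p _ _) _.
by rewrite [rnorm (p - _)]rdistC [c]splitr ltrD.
Qed.

Lemma cluster_pt_approx {u p} {v : nat -> E} : cluster_pt u p ->
  (forall n, rnorm (v n) < n.+1%:R^-1) ->
  forall e, 0 < e -> exists n, rnorm (u n - p) < e /\ rnorm (v n) < e.
Proof.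
move=> clp v_small e e0; have [m _ me] := near_infty_natSinv_lt (PosNum e0).
have [n mn upn] := clp e e0 m.
by exists n; split => //; apply: lt_trans (v_small n) (me _ mn).
Qed.

Lemma geometric_rcauchy u (D q : R) : 0 <= q < 1 ->
  (forall n, rnorm (u n.+1 - u n) <= D * q ^+ n) -> rcauchy u.
Proof.
move=> /andP[q0 q1] step; have D0 : 0 <= D.
  by have := step 0%N; rewrite expr0 mulr1; apply: le_trans (rnorm_ge0 _).
set C := D / (1 - q); have C0 : 0 <= C by rewrite divr_ge0 // subr_ge0 ltW.
have tail n k : rnorm (u (n + k)%N - u n) <= C * q ^+ n - C * q ^+ (n + k).
  elim: k => [|k IH]; first by rewrite addn0 !subrr rnorm0.
  have -> : C * q ^+ n - C * q ^+ (n + k.+1) =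
            D * q ^+ (n + k) + (C * q ^+ n - C * q ^+ (n + k)).
    by rewrite addnS exprS /C; field; rewrite subr_eq0 gt_eqF.
  by rewrite addnS; apply: le_trans (ler_rdist_add (u (n + k)%N) _ _) _; rewrite lerD.
have near_le n m : (n <= m)%N -> rnorm (u m - u n) <= C * q ^+ n.
  move=> nm; rewrite -(subnKC nm); apply: le_trans (tail _ _) _.
  by rewrite gerBl mulr_ge0 ?exprn_ge0.
move=> e e0; have C1 : 0 < C + 1 by rewrite ltr_pwDr.
have /(cvg_geometric 1) /cvgrPdist_lt qlim : `|q| < 1 by rewrite ger0_norm.
have [N _ qN] := qlim _ (divr_gt0 e0 C1).
have small n m : (N <= n)%N -> (n <= m)%N -> rnorm (u m - u n) < e.
  move=> Nn nm; apply: le_lt_trans (near_le _ _ nm) _.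
  have := qN _ Nn; rewrite /geometric /= mul1r sub0r normrN ger0_norm ?exprn_ge0 //.
  rewrite ltr_pdivlMr // => qn; apply: le_lt_trans qn.
  by rewrite mulrC ler_wpM2l ?exprn_ge0 ?lerDl.
exists N => n m Nn Nm; have [nm|/ltnW mn] := leqP n m; last exact: small.
by rewrite rdistC; apply: small.
Qed.

End sequences.

Section complete_space.
Context {R : realType} {E : completeNormedModType R[i]}.

Lemma rcauchy_cvg (u : nat -> E) : rcauchy u ->
  exists l, forall e, 0 < e -> exists N, forall n, (N <= n)%N -> rnorm (u n - l) < e.
Proof.
move=> u_cauchy.
have : cvg (u @ \oo).
  apply/cauchy_cvgP/cauchy_ballP => _ /gtr0_realC[e e0 ->].
  have [N uN] := u_cauchy e e0.
  exists (u @` [set n | (N <= n)%N], u @` [set n | (N <= n)%N]).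
    by split; exists N => // k /= Nk; exists k.
  by move=> [x y] /= [[n Nn <-] [m Nm <-]]; rewrite ball_rnormE uN.
move=> /cvgrPdist_lt u_lim; exists (lim (u @ \oo)) => e e0.
have [N _ uN] := u_lim e%:C (eqbRL (ltc0R _) e0).
exists N => n Nn; have := uN n Nn; rewrite rnormE ltcR rdistC //.
Qed.

Lemma contraction_fixed_point (F : E -> E) (q : R) : 0 <= q < 1 ->
  (forall x y, rnorm (F x - F y) <= q * rnorm (x - y)) -> exists x, F x = x.
Proof.
move=> q01 F_contr; have /andP[q0 q1] := q01; pose u n := iter n F 0.
have step n : rnorm (u n.+1 - u n) <= rnorm (u 1%N - u 0%N) * q ^+ n.
  elim: n => [|n IH]; first by rewrite expr0 mulr1.
  by rewrite /u !iterS exprS mulrCA (le_trans (F_contr _ _)) // ler_wpM2l.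
have [l ul] := rcauchy_cvg _ (geometric_rcauchy _ _ _ q01 step).
exists l; apply/eqP; rewrite -subr_eq0; apply/eqP/rnorm_small_eq0 => e e0.
have [N uN] := ul (e / 2) (divr_gt0 e0 (ltr0Sn _ 1)).
apply: le_trans (ler_rdist_add (F (u N)) _ _) _; rewrite [e]splitr lerD //.
  apply: le_trans (F_contr _ _) _; rewrite rdistC -[_ / 2]mul1r.
  by apply: ler_pM; [|exact: rnorm_ge0|exact: ltW|exact/ltW/uN].
by have /ltW := uN N.+1 (leqnSn N); rewrite /u iterS.
Qed.

End complete_space.

Definition has_bounded_inverse {R : realType} {E F : normedModType R[i]} (A : E -> F) :=
  exists W : F -> E, [/\ cancel W A, cancel A W, clinear W & has_op_bound W].

Section inverses.
Context {R : realType} {E F G : normedModType R[i]}.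

Lemma bounded_below_inverse (A : E -> F) (c : R) : clinear A -> 0 < c ->
  (forall x, c * rnorm x <= rnorm (A x)) -> (forall y, exists x, A x = y) ->
  has_bounded_inverse A.
Proof.
move=> A_lin c0 A_below A_surj; have [W AW] := choice A_surj.
have A_inj x x' : A x = A x' -> x = x'.
  move=> Axx'; apply/subr0_eq/rnorm0_eq0/le_anti; rewrite rnorm_ge0 andbT.
  by have := A_below (x - x'); rewrite (clinearB A_lin) Axx' subrr rnorm0 pmulr_rle0.
have WA : cancel A W by move=> x; apply: A_inj; rewrite AW.
exists W; split => //.
  by move=> a y y'; apply: A_inj; rewrite A_lin !AW.
by exists c^-1; rewrite ?invr_gt0 // => y; rewrite ler_pdivlMl // -{2}[y]AW.
Qed.

Lemma has_bounded_inverse_comp {A : F -> G} {B : E -> F} :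
  has_bounded_inverse A -> has_bounded_inverse B -> has_bounded_inverse (A \o B).
Proof.
move=> [WA [AWA WAA WA_lin [a a0 WAa]]] [WB [BWB WBB WB_lin [b b0 WBb]]].
exists (WB \o WA); split; first by move=> y /=; rewrite BWB AWA.
- by move=> x /=; rewrite WAA WBB.
- exact: clinear_comp.
exists (b * a); rewrite ?mulr_gt0 // => y /=; rewrite -mulrA.
by apply: le_trans (WBb _) _; apply: ler_wpM2l; [exact: ltW | exact: WAa].
Qed.

End inverses.

Section isometry_shift.
Context {R : realType} {E : completeNormedModType R[i]}.
Variables (V Vs : E -> E) (l : R[i]).
Hypotheses (V_lin : clinear V) (Vs_lin : clinear Vs).
Hypotheses (V_iso : forall x, rnorm (V x) = rnorm x)
           (Vs_iso : forall x, rnorm (Vs x) = rnorm x).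
Hypotheses (VVs : cancel Vs V) (l_not1 : `|l| != 1).

Let t := rnorm (l : R[i]^o).

Let t_not1 : t != 1.
Proof.
have normlE : `|l| = t%:C := rnormE (l : R[i]^o).
by apply: contra l_not1 => /eqP t1; rewrite normlE t1.
Qed.

Lemma isometry_shift_bounded_below x : `|1 - t| * rnorm x <= rnorm (V x - l *: x).
Proof.
have := lerB_rdist (V x) (l *: x); have := lerB_rdist (l *: x) (V x).
rewrite [rnorm (l *: x - _)]rdistC V_iso rnormZ -/t.
have := rnorm_ge0 x; have [t1|t1] := leP 0 (1 - t).
  by rewrite ger0_norm //; nra.
by rewrite ltr0_norm //; nra.
Qed.

Lemma isometry_shift_surjective y : exists x, V x - l *: x = y.
Proof.
have t0 : 0 <= t := rnorm_ge0 _.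
have [t1|t1] := ltP t 1.
  have contr x x' :
      rnorm (Vs (y + l *: x) - Vs (y + l *: x')) <= t * rnorm (x - x').
    by rewrite -(clinearB Vs_lin) Vs_iso opprD addrACA subrr add0r -scalerBr rnormZ.
  have [x xE] := contraction_fixed_point _ t (introT andP (conj t0 t1)) contr.
  by exists x; rewrite -{1}xE VVs addrK.
have {}t1 : 1 < t by rewrite lt_neqAle eq_sym t_not1.
have l0 : (l : R[i]^o) != 0 by rewrite -rnorm_gt0 (lt_trans ltr01).
have contr x x' :
    rnorm (l^-1 *: (V x - y) - l^-1 *: (V x' - y)) <= t^-1 * rnorm (x - x').
  by rewrite -scalerBr rnormZ rnormV opprB addrA subrK -(clinearB V_lin) V_iso.
have t01 : 0 <= t^-1 < 1 by rewrite invr_ge0 t0 invf_lt1 ?(lt_trans ltr01).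
have [x xE] := contraction_fixed_point _ _ t01 contr.
by exists x; rewrite -{2}xE scalerA mulfV // scale1r opprB addrC subrK.
Qed.

Lemma isometry_shift_inverse : has_bounded_inverse (fun x => V x - l *: x).
Proof.
apply: (bounded_below_inverse _ `|1 - t|).
- exact: clinear_subZ.
- by rewrite normr_gt0 subr_eq0 eq_sym.
- exact: isometry_shift_bounded_below.
- exact: isometry_shift_surjective.
Qed.

End isometry_shift.

Section riesz.
Context {R : realType} {E : normedModType R[i]}.

Lemma riesz_lemma (S : set E) (v : E) (d : R) :
  S 0 -> (forall z z' a, S z -> S z' -> S (z + a *: z')) ->
  0 < d -> (forall z, S z -> d <= rnorm (v - z)) ->
  exists z0 (s : R[i]), [/\ S z0, rnorm (s *: (v - z0)) = 1 &
    forall z, S z -> 1 / 2 <= rnorm (s *: (v - z0) - z)].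
Proof.
move=> S0 S_lin d0 v_far; pose D := [set rnorm (v - z) | z in S].
have D_ne : D !=set0 by exists (rnorm (v - 0)), 0.
have D_lb : has_lbound D by exists 0 => _ [z _ <-]; apply: rnorm_ge0.
have D_inf : has_inf D by [].
have dist0 : 0 < inf D.
  by apply: (lt_le_trans d0); apply: lb_le_inf D_ne _ => _ [z Sz <-]; apply: v_far.
have [_ [z0 Sz0 <-] z0_lt] := inf_adherent dist0 D_inf.
set r := rnorm (v - z0) in z0_lt *.
have r0 : 0 < r by apply: (lt_le_trans dist0); apply: (ge_inf D_lb); exists z0.
have ri0 : 0 <= r^-1 by rewrite invr_ge0 ltW.
exists z0, (r^-1)%:C; split => //; first by rewrite rnormZ_ge0 // mulVf ?gt_eqF.
move=> z Sz.
have -> : (r^-1)%:C *: (v - z0) - z = (r^-1)%:C *: (v - (z0 + r%:C *: z)).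
  rewrite opprD addrA [in RHS]scalerBr scalerA -rmorphM mulVf ?gt_eqF //.
  by rewrite rmorph1 scale1r.
have far : inf D <= rnorm (v - (z0 + r%:C *: z)).
  by apply: (ge_inf D_lb); exists (z0 + r%:C *: z) => //; apply: S_lin.
rewrite rnormZ_ge0 //; apply: le_trans (ler_wpM2l ri0 far).
by rewrite ler_pdivlMl //; lra.
Qed.

End riesz.

Definition seq_compact_op {R : realType} {E F : normedModType R[i]} (C : E -> F) :=
  forall u : nat -> E, (forall n, rnorm (u n) <= 1) -> exists p, cluster_pt (C \o u) p.

Definition dense_range {R : realType} {E F : normedModType R[i]} (f : E -> F) :=
  forall y e, 0 < e -> exists x, rnorm (f x - y) < e.

Section fredholm_alternative.
Context {R : realType} {E : normedModType R[i]}.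
Variables (A : E -> E) (L : R).
Hypotheses (A_lin : clinear A) (L0 : 0 < L).
Hypothesis A_bound : forall x, rnorm (A x) <= L * rnorm x.
Hypothesis A_compact : seq_compact_op (fun x => A x - x).

Lemma approx_graph_eq z y :
  (forall e, 0 < e -> exists x, rnorm (A x - y) < e /\ rnorm (x - z) < e) -> A z = y.
Proof.
move=> approx; apply/subr0_eq/rnorm_small_eq0 => e e0.
have L1 : 0 < L + 1 by rewrite addr_gt0.
have [x [Axy xz]] := approx _ (divr_gt0 e0 L1).
have -> : e = L * (e / (L + 1)) + e / (L + 1) by field; rewrite gt_eqF.
apply: le_trans (ler_rdist_add (A x) _ _) _; apply: lerD; last exact: ltW.
rewrite rdistC -(clinearB A_lin); apply: le_trans (A_bound _) _.
exact/(ler_wpM2l (ltW L0))/ltW.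
Qed.

Lemma clinear_iter k : clinear (iter k A).
Proof. by elim: k => [|k IH] a x y //=; rewrite IH A_lin. Qed.

Lemma rnorm_iter_le k x : rnorm (iter k A x) <= L ^+ k * rnorm x.
Proof.
elim: k => [|k IH]; first by rewrite expr0 mul1r.
by rewrite iterS exprS -mulrA; apply: le_trans (A_bound _) (ler_wpM2l (ltW L0) IH).
Qed.

Lemma iter_kernel_le {j k y} : (j <= k)%N -> iter j A y = 0 -> iter k A y = 0.
Proof. by move=> jk Ajy; rewrite -(subnK jk) iterD Ajy (clinear0 (clinear_iter _)). Qed.

Lemma riesz_kernel_chain {x} : x != 0 -> A x = 0 -> (forall y, exists x, A x = y) ->
  forall k, exists y, [/\ rnorm y <= 1, iter k.+1 A y = 0 &
    forall z, iter k A z = 0 -> 1 / 2 <= rnorm (y - z)].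
Proof.
move=> x0 Ax0 A_surj k; have [g Ag] := choice A_surj.
have Akv : iter k A (iter k g x) = x by elim: k => // k IH; rewrite iterSr iterS Ag.
have Lk0 : 0 < L ^+ k by rewrite exprn_gt0.
have Ak_lin := clinear_iter k.
have S0 : iter k A 0 = 0 := clinear0 Ak_lin.
have S_lin z z' a : iter k A z = 0 -> iter k A z' = 0 -> iter k A (z + a *: z') = 0.
  by move=> Akz Akz'; rewrite (clinearD Ak_lin) (clinearZ Ak_lin) Akz Akz' scaler0 addr0.
have d0 : 0 < rnorm x / L ^+ k by rewrite divr_gt0 ?rnorm_gt0.
have v_far z : iter k A z = 0 -> rnorm x / L ^+ k <= rnorm (iter k g x - z).
  move=> Akz; have Akvz : iter k A (iter k g x - z) = x.
    by rewrite (clinearB Ak_lin) Akv Akz subr0.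
  by rewrite ler_pdivrMr // mulrC -{1}Akvz rnorm_iter_le.
have [z0 [s [Akz0 w1 w_far]]] :=
  riesz_lemma [set z | iter k A z = 0] _ _ S0 S_lin d0 v_far.
exists (s *: (iter k g x - z0)); split => //; first by rewrite w1.
rewrite (clinearZ (clinear_iter _)) (clinearB (clinear_iter _)) !iterS Akv Akz0.
by rewrite Ax0 (clinear0 A_lin) subrr scaler0.
Qed.

Lemma surjective_injective :
  (forall y, exists x, A x = y) -> forall x, A x = 0 -> x = 0.
Proof.
move=> A_surj x Ax0; apply: contrapT => /eqP x0.
have [Y chainY] := choice (riesz_kernel_chain x0 Ax0 A_surj).
have Y1 n : rnorm (Y n) <= 1 by have [] := chainY n.
have [p clp] := A_compact Y Y1.
have [j [k [jk close]]] := cluster_pt_close clp (divr_gt0 ltr01 (ltr0Sn R 1)).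
have [_ Akk far] := chainY k; have [_ Ajj _] := chainY j.
move: close; rewrite ltNge /= => /negP; apply.
have -> : A (Y k) - Y k - (A (Y j) - Y j) = - (Y k - (A (Y k) - A (Y j) + Y j)).
  by rewrite [RHS]opprB opprB -addrA [Y j - _]addrC addrA addrAC addrA.
rewrite rnormN; apply: far.
rewrite (clinearD (clinear_iter _)) (clinearB (clinear_iter _)) -!iterSr Akk.
by rewrite (iter_kernel_le jk Ajj) (iter_kernel_le (leqW jk) Ajj) subrr addr0.
Qed.

Lemma bounded_below_off_kernel : exists2 g, 0 < g & forall w, rnorm w <= 1 ->
  (forall z, A z = 0 -> 1 / 2 <= rnorm (w - z)) -> g <= rnorm (A w).
Proof.
apply: contrapT => no_bound.
have bad n : exists w, [/\ rnorm w <= 1, forall z, A z = 0 -> 1 / 2 <= rnorm (w - z)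
                        & rnorm (A w) < n.+1%:R^-1].
  apply: contrapT => none; apply: no_bound; exists n.+1%:R^-1 => // w w1 w_far.
  by rewrite leNgt; apply/negP => Aw; apply: none; exists w.
have [W badW] := choice bad.
have AW_small n : rnorm (A (W n)) < n.+1%:R^-1 by have [] := badW n.
have [p clp] : exists p, cluster_pt ((fun x => A x - x) \o W) p.
  by apply: A_compact => n; have [] := badW n.
have near_p e : 0 < e -> exists n, rnorm (A (W n)) < e /\ rnorm (W n - - p) < e.
  move=> e0; have e20 : 0 < e / 2 by rewrite divr_gt0.
  have [n [Wp AW]] := cluster_pt_approx clp AW_small _ e20.
  exists n; split; first by apply: lt_trans AW _; rewrite ltr_pdivrMr // ltr_pMr // ltr1n.
  have -> : W n - - p = A (W n) - (A (W n) - W n - p).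
    by rewrite !opprD !opprK addrA addNKr.
  by apply: le_lt_trans (ler_rnormD _ _) _; rewrite rnormN [e]splitr ltrD.
have Ap : A (- p) = 0.
  by apply: approx_graph_eq => e /near_p [n [AW Wp]]; exists (W n); rewrite subr0.
have [n [_ Wp]] := near_p _ (divr_gt0 ltr01 (ltr0Sn R 1)).
by have [_ W_far _] := badW n; have := W_far _ Ap; rewrite leNgt Wp.
Qed.

Lemma dist_kernel_le : exists2 c, 0 < c &
  forall x, exists z, A z = 0 /\ rnorm (x - z) <= c * rnorm (A x) + 1.
Proof.
have [g g0 A_below] := bounded_below_off_kernel.
exists g^-1; rewrite ?invr_gt0 // => x.
have [[d d0 x_far]|x_near] :=
  pselect (exists2 d, 0 < d & forall z, A z = 0 -> d <= rnorm (x - z)).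
  have ker_lin z z' a : A z = 0 -> A z' = 0 -> A (z + a *: z') = 0.
    by move=> Az Az'; rewrite (clinearD A_lin) (clinearZ A_lin) Az Az' scaler0 addr0.
  have [z0 [s [Az0 w1 w_far]]] := riesz_lemma _ _ _ (clinear0 A_lin) ker_lin d0 x_far.
  have /A_below /(_ w_far) : rnorm (s *: (x - z0)) <= 1 by rewrite w1.
  rewrite (clinearZ A_lin) (clinearB A_lin) Az0 subr0 rnormZ => Aw_ge.
  move: w1; rewrite rnormZ => w1; exists z0; split => //.
  suff : rnorm (x - z0) <= g^-1 * rnorm (A x) by lra.
  rewrite ler_pdivlMl //; apply: le_trans (ler_wpM2r (rnorm_ge0 _) Aw_ge) _.
  by rewrite mulrAC w1 mul1r.
have [z Az xz] : exists2 z, A z = 0 & rnorm (x - z) < 1.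
  apply: contrapT => no_z; apply: x_near; exists 1 => // z Az.
  by rewrite leNgt; apply/negP => xz; apply: no_z; exists z.
exists z; split => //; apply: le_trans (ltW xz) _.
by rewrite lerDr mulr_ge0 ?invr_ge0 ?rnorm_ge0 // ltW.
Qed.

Lemma dense_range_surjective : dense_range A -> forall y, exists x, A x = y.
Proof.
move=> A_dense y; have [c c0 A_ker] := dist_kernel_le.
have X_ex n : exists x, rnorm (A x - y) < n.+1%:R^-1 by apply: A_dense; rewrite invr_gt0.
have [X AX] := choice X_ex.
have [Z XZ] := choice (fun n => A_ker (X n)).
pose M := c * (rnorm y + 1) + 1.
have M0 : 0 < M by apply: ltr_wpDl ltr01; rewrite mulr_ge0 ?addr_ge0 ?rnorm_ge0 // ltW.
pose w n := X n - Z n.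
have Aw n : A (w n) = A (X n).
  by rewrite (clinearB A_lin); have [-> _] := XZ n; rewrite subr0.
have w_le n : rnorm (w n) <= M.
  have [_ XZ_le] := XZ n; apply: le_trans XZ_le _; rewrite lerD2r.
  apply/(ler_wpM2l (ltW c0))/ltW.
  have := ler_rnormD (A (X n) - y) y; rewrite subrK => /le_lt_trans; apply.
  by rewrite addrC ltrD2l; apply: lt_le_trans (AX n) _; rewrite invf_le1 ?ler1n.
pose u n := (M^-1)%:C *: w n.
have [p clp] : exists p, cluster_pt ((fun x => A x - x) \o u) p.
  apply: A_compact => n; rewrite /u rnormZ_ge0 ?invr_ge0 ?(ltW M0) //.
  by rewrite ler_pdivrMl // mulr1.
exists (y - M%:C *: p); apply: approx_graph_eq => e e0.
have Me : 0 < e / (1 + M) by rewrite divr_gt0 // addr_gt0.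
have [n [up AXy]] := cluster_pt_approx clp AX _ Me.
exists (w n); rewrite Aw; split.
  apply: lt_le_trans AXy _; rewrite ler_pdivrMr ?(addr_gt0 ltr01 M0) //.
  by apply: ler_peMr; rewrite ?lerDl ltW.
have -> : w n - (y - M%:C *: p) = (A (X n) - y) - M%:C *: ((A (u n) - u n) - p).
  rewrite /u (clinearZ A_lin) Aw -scalerBr [M%:C *: (_ - p)]scalerBr scalerA.
  rewrite -rmorphM mulfV ?gt_eqF // rmorph1 scale1r.
  move: (w n) (A (X n)) (M%:C *: p) => b a d.
  rewrite [a - y]addrC -[a - b - d]addrA -opprD addrKA opprK opprB.
  by rewrite [RHS]addrCA [- y + d]addrC.
apply: le_lt_trans (ler_rnormD _ _) _; rewrite rnormN rnormZ_ge0 ?(ltW M0) //.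
have -> : e = e / (1 + M) + M * (e / (1 + M)).
  by rewrite -[X in _ = X + _]mul1r -mulrDl mulrC divfK // gt_eqF // addr_gt0.
by rewrite ltrD // ltr_pM2l.
Qed.

Lemma dense_range_inverse : dense_range A -> has_bounded_inverse A.
Proof.
move=> A_dense; have A_surj := dense_range_surjective A_dense.
have A_inj := surjective_injective A_surj.
have [g g0 A_below] := bounded_below_off_kernel.
apply: (bounded_below_inverse _ g A_lin g0 _ A_surj) => x.
have [->|x0] := eqVneq x 0; first by rewrite (clinear0 A_lin) !rnorm0 mulr0.
have nx0 : 0 < rnorm x by rewrite rnorm_gt0.
have s0 : 0 <= (rnorm x)^-1 by rewrite invr_ge0 ltW.
have w1 : rnorm ((rnorm x)^-1%:C *: x) = 1 by rewrite rnormZ_ge0 // mulVf ?gt_eqF.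
have /A_below : rnorm ((rnorm x)^-1%:C *: x) <= 1 by rewrite w1.
have w_far z : A z = 0 -> 1 / 2 <= rnorm ((rnorm x)^-1%:C *: x - z).
  by move=> /A_inj ->; rewrite subr0 w1 ler_pdivrMr // mul1r ler1n.
by move=> /(_ w_far); rewrite (clinearZ A_lin) rnormZ_ge0 // ler_pdivlMl // mulrC.
Qed.

End fredholm_alternative.

Lemma id_add_compact_inverse {R : realType} {E : normedModType R[i]} {C : E -> E} :
  clinear C -> has_op_bound C -> seq_compact_op C -> dense_range (fun x => x + C x) ->
  has_bounded_inverse (fun x => x + C x).
Proof.
move=> C_lin [c c0 Cc] C_compact; apply: (@dense_range_inverse _ _ _ (1 + c)).
- by move=> a x y; rewrite C_lin scalerDr addrACA.
- by rewrite addr_gt0.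
- by move=> x; rewrite mulrDl mul1r; apply: le_trans (ler_rnormD _ _) _; rewrite lerD2l.
- move=> u /C_compact [p clp]; exists p => e e0 m; have [n mn Cp] := clp e e0 m.
  by exists n; rewrite //= (addrAC (u n)) subrr add0r.
Qed.

Section operator_facts.
Context {R : realType}.

Lemma closure_range_dense {E F : normedModType R[i]} {f : E -> F} :
  closure (range f) = setT -> dense_range f.
Proof.
move=> f_dense y e e0; have /closure_rnormP : closure (range f) y by rewrite f_dense.
by move=> /(_ e e0) [_ [x _ <-] yfx]; exists x; rewrite rdistC.
Qed.

Lemma subset_dense_range {E E' F : normedModType R[i]} (f : E -> F) (g : E' -> F) :
  range g `<=` range f -> dense_range g -> dense_range f.
Proof.
move=> gf g_dense y e /(g_dense y) [x' gx'y].
by have [x _ fx] := gf _ (ex_intro2 _ _ x' I erefl); exists x; rewrite fx.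
Qed.

Lemma dense_range_lcancel {E F G : normedModType R[i]}
    {A : E -> F} {B : F -> G} {W : G -> F} :
  cancel B W -> clinear W -> has_op_bound W -> dense_range (B \o A) -> dense_range A.
Proof.
move=> BW W_lin [c c0 Wc] BA_dense y e e0.
have [x BAx] := BA_dense (B y) _ (divr_gt0 e0 c0); exists x.
rewrite -(BW (A x)) -(BW y) -(clinearB W_lin); apply: le_lt_trans (Wc _) _.
by rewrite -ltr_pdivlMl // mulrC.
Qed.

Lemma intertwining_dense_range {E F : normedModType R[i]}
    {X : E -> F} {U : E -> E} {T : F -> F} {l : R[i]} :
  clinear X -> (forall x, X (U x) = T (X x)) ->
  (forall y, exists x, U x - l *: x = y) -> dense_range X ->
  dense_range (fun x => T x - l *: x).
Proof.
move=> X_lin XU Ul_surj; apply: subset_dense_range => _ [y _ <-].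
have [x <-] := Ul_surj y; exists (X x) => //.
by rewrite (clinearB X_lin) (clinearZ X_lin) XU.
Qed.

Lemma compact_op_seq_compact {E F : normedModType R[i]} {K : E -> F} :
  compact_op K -> seq_compact_op K.
Proof.
move=> [_ K_compact] u u1; apply: compact_cluster_pt K_compact _ => n.
by apply: subset_closure; exists (u n); rewrite //= rnormE lecR.
Qed.

Lemma seq_compact_op_comp {E F G : normedModType R[i]} {W : F -> G} {C : E -> F} :
  clinear W -> has_op_bound W -> seq_compact_op C -> seq_compact_op (W \o C).
Proof.
move=> W_lin [c c0 Wc] C_compact u u1; have [p clp] := C_compact u u1.
exists (W p) => e e0 m; have [n mn Cp] := clp _ (divr_gt0 e0 c0) m.
exists n => //=; rewrite -(clinearB W_lin); apply: le_lt_trans (Wc _) _.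
by rewrite -ltr_pdivlMl // mulrC.
Qed.

Lemma bounded_inverse_not_spectrum {E : normedModType R[i]} {T : E -> E} {l : R[i]} :
  has_bounded_inverse (fun x => T x - l *: x) -> ~ spectrum T l.
Proof.
move=> [W [TW WT W_lin W_bound]]; apply; exists W; split => //.
by split => //; apply: clinear_bounded_continuous.
Qed.

End operator_facts.

Section unitary_operators.
Context {R : realType} {H : completeNormedModType R[i]} {ip : H -> H -> R[i]}.
Hypothesis ip_inner : is_inner_product ip.

Lemma rnorm_ip_eq (x y : H) : ip x x = ip y y -> rnorm x = rnorm y.
Proof.
have [_ _ ipE] := ip_inner; rewrite -!ipE => /eqP.
rewrite rnormE [`|y|]rnormE -!rmorphXn (inj_eq (@complexI R)).
by rewrite eqrXn2 ?rnorm_ge0 // => /eqP.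
Qed.

Lemma unitary_shift_inverse {U : H -> H} {l : R[i]} : unitary ip U -> `|l| != 1 ->
  has_bounded_inverse (fun x => U x - l *: x).
Proof.
move=> [[U_lin _] [Us [[Us_lin _] adj UsU UUs]]] l_not1.
apply: (@isometry_shift_inverse _ _ U Us l U_lin Us_lin) => //.
- by move=> x; apply: rnorm_ip_eq; rewrite adj UsU.
- by move=> x; apply: rnorm_ip_eq; rewrite -adj UUs.
Qed.

End unitary_operators.

Local Close Scope complex_scope.

Theorem lemma7p1 (R : realType)
  (HH KK : completeNormedModType R[i])
  (ipH : HH -> HH -> R[i]) (ipK : KK -> KK -> R[i])
  (hipH : is_inner_product ipH) (hipK : is_inner_product ipK)
  (U : KK -> KK) (T V K : HH -> HH) (X : KK -> HH)
  (hU : unitary ipK U) (hV : unitary ipH V)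
  (hT : bounded_op T) (hK : compact_op K) (hX : bounded_op X)
  (hTVK : forall x, T x = V x + K x)
  (hXU : forall k, X (U k) = T (X k))
  (hdense : closure (range X) = setT) :
  spectrum T `<=` @unit_circle R.
Proof.
(* [hT] is unused: the argument only needs T = V + K. *)
move=> l Tl; apply: contrapT => /eqP l_not1; apply: (bounded_inverse_not_spectrum _ Tl).
have [[V_lin _] _] := hV; have [[K_lin K_cont] _] := hK.
have Vl_inv := unitary_shift_inverse hipH hV l_not1.
have [WV [VlWV WVVl WV_lin WV_bound]] := Vl_inv.
pose C := WV \o K.
have VlA x : V (x + C x) - l *: (x + C x) = T x - l *: x.
  by rewrite (clinearD (clinear_subZ _ l V_lin)) VlWV hTVK addrAC.
have A_dense : dense_range (fun x => x + C x).
  apply: (dense_range_lcancel WVVl WV_lin WV_bound).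
  rewrite (_ : _ \o _ = fun x => T x - l *: x); last exact: funext.
  have [WU [UlWU _ _ _]] := unitary_shift_inverse hipK hU l_not1.
  apply: (intertwining_dense_range hX.1 hXU _ (closure_range_dense hdense)).
  by move=> y; exists (WU y).
rewrite (_ : (fun x => T x - l *: x) = (fun x => V x - l *: x) \o (fun x => x + C x)).
  apply: (has_bounded_inverse_comp Vl_inv); apply: id_add_compact_inverse A_dense.
  - exact: clinear_comp.
  - exact/has_op_bound_comp/clinear_continuous_bound.
  - exact/seq_compact_op_comp/compact_op_seq_compact.
by apply: funext => x /=; rewrite VlA.
Qed.
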